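(* Let $(a_n)_{n=1}^N\in\mathcal A_1$ and let $\{\mathcal P_n\}_{n=1}^N$ be a sequence of pyramids. For any partition $\{N_k\}_{k=1}^M$, $M\in\overline{\mathbb N}$, of $[N]$ into nonempty pairwise disjoint subsets, setting $\alpha_k:=\sum_{n\in N_k}a_n>0$, we have $$\sum_{n=1}^N\mathcal P_n^{a_n}=\sum_{k=1}^M\Big(\sum_{n\in N_k}\mathcal P_n^{a_n/\alpha_k}\Big)^{\alpha_k}.$$
   Context: An mm-space is a triple $(X,d_X,\mu_X)$ with $(X,d_X)$ complete separable metric and $\mu_X$ a Borel probability measure; $\mathcal X$ is the set of mm-isomorphism classes. $Y\prec X$ means there is a 1-Lipschitz $f:X\to Y$ with $f_*\mu_X=\mu_Y$. The box distance $\square(X,Y)$ is the infimum of $\max\{\operatorname{dis}(S),1-\pi(S)\}$ over couplings $\pi$ of $\mu_X,\mu_Y$ and Borel $S\subset X\times Y$, $\operatorname{dis}(S)=\sup\{|d_X(x,x')-d_Y(y,y')|:(x,y),(x',y')\in S\}$. A pyramid is a nonempty box-closed subset of $\mathcal X$ closed downward under $\prec$ and directed. $\overline{\mathbb N}=\mathbb N\cup\{\infty\}$, $[N]=\{1,\dots,N\}$ or $\mathbb N$. $\mathcal A_1$: sequences $(a_n)_{n=1}^N$ with $a_n\in(0,1]$, $\sum a_n=1$. For a countable index set $I$, weights $(c_i)_{i\in I}$ in $(0,1]$ with $\sum_ic_i=1$ and pyramids $\mathcal P_i$, the direct sum $\sum_{i\in I}\mathcal P_i^{c_i}$ is the set of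 $X\in\mathcal X$ for which there exist $X_i\in\mathcal P_i$ and 1-Lipschitz $f_i:X_i\to X$ with $\mu_X=\sum_ic_i(f_i)_*\mu_{X_i}$; it is a pyramid. *)

From HB Require Import structures.
From mathcomp Require Import all_boot all_order all_algebra.
From mathcomp Require Import all_classical all_reals all_analysis.
From mathcomp Require Import Rstruct Rstruct_topology.
Set Implicit Arguments. Unset Strict Implicit. Unset Printing Implicit Defensive.
Import Order.TTheory GRing.Theory Num.Theory.
Local Open Scope classical_set_scope.
Local Open Scope ring_scope.

Notation RR := Rdefinitions.R.

Definition is_metric (T : Type) (d : T -> T -> RR) : Prop :=
  [/\ forall x y, 0 <= d x y,
      forall x y, d x y = 0 <-> x = y,
      forall x y, d x y = d y x &
      forall x y z, d x z <= d x y + d y z].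

Definition d_cauchy (T : Type) (d : T -> T -> RR) (u : nat -> T) : Prop :=
  forall e : RR, 0 < e -> exists N : nat, forall m n, (N <= m)%N -> (N <= n)%N ->
    d (u m) (u n) < e.

Definition d_converges (T : Type) (d : T -> T -> RR) (u : nat -> T) (x : T) : Prop :=
  forall e : RR, 0 < e -> exists N : nat, forall n, (N <= n)%N -> d (u n) x < e.

Definition d_complete (T : Type) (d : T -> T -> RR) : Prop :=
  forall u : nat -> T, d_cauchy d u -> exists x, d_converges d u x.

Definition d_separable (T : Type) (d : T -> T -> RR) : Prop :=
  exists D : set T, countable D /\
    forall x e, 0 < e -> exists2 y, D y & d x y < e.

Definition d_open (T : Type) (d : T -> T -> RR) (A : set T) : Prop :=
  forall x, A x -> exists2 r : RR, 0 < r & [set y | d x y < r] `<=` A.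

Definition d_borel (T : Type) (d : T -> T -> RR) : set (set T) :=
  smallest (sigma_algebra setT) (d_open d).

(** Probability measure on a sigma-algebra [B] (values outside [B] are irrelevant). *)
Definition is_prob (T : Type) (B : set (set T)) (mu : set T -> \bar RR) : Prop :=
  [/\ mu set0 = 0%E,
      forall A, B A -> (0 <= mu A)%E,
      mu setT = 1%E &
      forall F : nat -> set T, (forall n, B (F n)) -> trivIset setT F ->
        ((fun n => \sum_(0 <= i < n) mu (F i)) @ \oo --> mu (\bigcup_n F n))%E].

Record mmspace := MMSpace {
  mm_car : Type;
  mm_d : mm_car -> mm_car -> RR;
  mm_metric : is_metric mm_d;
  mm_complete : d_complete mm_d;
  mm_separable : d_separable mm_d;
  mm_mu : set mm_car -> \bar RR;
  mm_prob : is_prob (d_borel mm_d) mm_mu }.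

Arguments mm_mu : clear implicits.

Definition mm_borel (X : mmspace) : set (set (mm_car X)) := d_borel (@mm_d X).
Arguments mm_borel : clear implicits.

Definition lip1 (X Y : mmspace) (f : mm_car X -> mm_car Y) : Prop :=
  forall x x', mm_d (f x) (f x') <= mm_d x x'.

Definition pushes (X Y : mmspace) (f : mm_car X -> mm_car Y) : Prop :=
  forall A, mm_borel Y A -> mm_mu Y A = mm_mu X (f @^-1` A).

Definition mm_prec (Y X : mmspace) : Prop :=
  exists f : mm_car X -> mm_car Y, lip1 f /\ pushes f.

(** Borel sets of X × Y (product sigma-algebra of the Borel sets, which is the
    Borel sigma-algebra of the product since X, Y are separable). *)
Definition prod_borel (X Y : mmspace) : set (set (mm_car X * mm_car Y)) :=
  smallest (sigma_algebra setT)
    [set A `*` B | A in mm_borel X & B in mm_borel Y].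

Definition is_coupling (X Y : mmspace) (pi : set (mm_car X * mm_car Y) -> \bar RR) : Prop :=
  [/\ is_prob (@prod_borel X Y) pi,
      forall A, mm_borel X A -> pi (A `*` setT) = mm_mu X A &
      forall B, mm_borel Y B -> pi (setT `*` B) = mm_mu Y B].

Definition dis (X Y : mmspace) (S : set (mm_car X * mm_car Y)) : \bar RR :=
  ereal_sup [set (`|mm_d pq.1.1 pq.2.1 - mm_d pq.1.2 pq.2.2|)%:E
            | pq in [set pq | S pq.1 /\ S pq.2]].

Definition box (X Y : mmspace) : \bar RR :=
  ereal_inf [set maxe (dis S) (1 - pi S)%E
            | pi in [set pi | is_coupling pi]
            & S in [set S | @prod_borel X Y S]].

Definition box_closed (P : set mmspace) : Prop :=
  forall X, (forall e : RR, 0 < e -> exists2 Y, P Y & (box X Y < e%:E)%E) -> P X.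

Definition pyramid (P : set mmspace) : Prop :=
  [/\ exists X, P X,
      box_closed P,
      forall X Y, P X -> mm_prec Y X -> P Y &
      forall X Y, P X -> P Y -> exists2 Z, P Z & mm_prec X Z /\ mm_prec Y Z].

Definition dsum (J : set nat) (c : nat -> RR) (P : nat -> set mmspace) : set mmspace :=
  [set X | exists Xs : nat -> mmspace,
     (forall i, J i -> P i (Xs i)) /\
     exists fs : forall i, mm_car (Xs i) -> mm_car X,
       (forall i, J i -> lip1 (fs i)) /\
       forall A, mm_borel X A ->
         mm_mu X A = \esum_(i in J) ((c i)%:E * mm_mu (Xs i) (fs i @^-1` A))%E].

(** [[N]] for [N ∈ ℕ ∪ {∞}] ([None] = ∞). *)
Definition idx (N : option nat) : set nat :=
  match N with
  | Some N => [set n | (1 <= n <= N)%N]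
  | None => [set n | (1 <= n)%N]
  end.

Definition in_A1 (N : option nat) (a : nat -> RR) : Prop :=
  (forall n, idx N n -> 0 < a n <= 1) /\
  (\esum_(n in idx N) (a n)%:E = 1%E).

Definition is_partition (N M : option nat) (Nk : nat -> set nat) : Prop :=
  [/\ forall k, idx M k -> Nk k !=set0,
      forall k, idx M k -> Nk k `<=` idx N,
      forall k l, idx M k -> idx M l -> k <> l -> Nk k `&` Nk l = set0 &
      \bigcup_(k in idx M) Nk k = idx N].

(* The measure of a point X of the left-hand side is the mixture
   sum_n a_n (f_n)_* mu_{X_n}.  Grouping its terms by blocks writes it as
   sum_k alpha_k nu_k, where nu_k = sum_{n in N_k} (a_n / alpha_k) (f_n)_* mu_{X_n}
   is again a probability measure; X equipped with nu_k lies in the inner direct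
   sum, and the identity maps place X in the iterated one.  Conversely, composing
   the maps of the two levels, each n being routed through the unique block
   containing it, represents a point of the right-hand side directly. *)

From HB Require Import structures.
From mathcomp Require Import all_boot all_order all_algebra.
From mathcomp Require Import all_classical all_reals all_analysis.
From mathcomp Require Import Rstruct Rstruct_topology.
Import Order.TTheory GRing.Theory Num.Theory.
Local Open Scope classical_set_scope.
Local Open Scope ring_scope.
Local Open Scope ereal_scope.

Section esum_nat.
Variable R : realType.
Implicit Types (I : set nat).

Lemma esumZl I (x : R) (b : nat -> \bar R) : (0 <= x)%R ->
  (forall i, I i -> 0 <= b i) ->
  \esum_(i in I) (x%:E * b i) = x%:E * \esum_(i in I) b i.
Proof.
move=> x0 b0; rewrite -[I]set_mem_set -!nneseries_esum ?nneseriesZl //.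
all: by move=> i /set_mem /b0 ?; rewrite ?mule_ge0.
Qed.

Lemma esum_nneseries I (g : nat -> nat -> \bar R) :
  (forall i n, I i -> 0 <= g i n) ->
  \esum_(i in I) \sum_(n <oo) g i n = \sum_(n <oo) \esum_(i in I) g i n.
Proof.
move=> g0; pose g' i n := if i \in I then g i n else 0.
have g'0 i n : 0 <= g' i n by rewrite /g'; case: ifPn => // /set_mem /g0.
rewrite esum_mkcond -nneseries_esumT; last first.
  move=> i; case: ifPn => // /set_mem Ii.
  by apply: nneseries_ge0 => n _ _; apply: g0.
transitivity (\sum_(i <oo) \sum_(n <oo) g' i n).
  by apply: eq_eseriesr => i _; rewrite /g'; case: ifPn => // _; rewrite eseries0.
rewrite nneseries_interchange //; apply: eq_eseriesr => n _.
by rewrite esum_mkcond nneseries_esumT.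
Qed.
End esum_nat.

Lemma esum_subset [R : realType] [T : choiceType] [I J : set T] (b : T -> \bar R) :
  I `<=` J -> \esum_(i in I) b i <= \esum_(i in J) b i.
Proof.
move=> IJ; apply: ge_ereal_sup => _ [X [finX XI] <-].
by apply: ereal_sup_ubound; exists X => //; split=> // x /XI /IJ.
Qed.

Lemma mm_mu_ge0 (X : mmspace) (A : set (mm_car X)) :
  mm_borel X A -> 0 <= mm_mu X A.
Proof. by case: (mm_prob X) => _ mu_ge0 _ _; apply: mu_ge0. Qed.

Lemma mm_mu_bigcup (X : mmspace) (F : nat -> set (mm_car X)) :
  (forall n, mm_borel X (F n)) -> trivIset setT F ->
  mm_mu X (\bigcup_n F n) = \sum_(n <oo) mm_mu X (F n).
Proof.
by move=> BF tF; apply/esym/cvg_lim => //; case: (mm_prob X) => _ _ _; apply.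
Qed.

Lemma lip1_borel_preimage {X Y : mmspace} {f : mm_car X -> mm_car Y} :
  lip1 f -> forall A, mm_borel Y A -> mm_borel X (f @^-1` A).
Proof.
move=> f_lip A BA; pose G := [set B | mm_borel X (f @^-1` B)].
have [s0 sC sU] := @smallest_sigma_algebra _ setT (d_open (@mm_d X)).
apply: (BA G); split; first split.
- by rewrite /G /= preimage_set0.
- by move=> B GB; rewrite /G /= setTD preimage_setC -setTD; apply: sC.
- by move=> F GF; rewrite /G /= preimage_bigcup; apply: sU.
move=> B oB; apply: sub_sigma_algebra => x /= Bfx.
have [r r0 ballB] := oB _ Bfx; exists r => // y /= dxy; apply: ballB => /=.
exact: le_lt_trans (f_lip x y) dxy.
Qed.

Section mixture.
Variables (X : mmspace) (J : set nat) (c : nat -> RR) (Xs : nat -> mmspace).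
Variable fs : forall i, mm_car (Xs i) -> mm_car X.

Definition mixture_mu (A : set (mm_car X)) : \bar RR :=
  \esum_(i in J) ((c i)%:E * mm_mu (Xs i) (fs i @^-1` A)).

Definition mixture_admissible : Prop :=
  [/\ forall i, J i -> lip1 (fs i), forall i, J i -> (0 <= c i)%R &
      \esum_(i in J) (c i)%:E = 1].

Hypothesis mixJ : mixture_admissible.

Let mixture_term_ge0 A i : mm_borel X A -> J i ->
  0 <= (c i)%:E * mm_mu (Xs i) (fs i @^-1` A).
Proof.
have [fs_lip c_ge0 _] := mixJ; move=> BA Ji.
rewrite mule_ge0 ?lee_fin ?c_ge0 ?mm_mu_ge0 //.
exact: lip1_borel_preimage (fs_lip i Ji) _ BA.
Qed.

Lemma mixture_mu_bigcup (F : nat -> set (mm_car X)) :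
  (forall n, mm_borel X (F n)) -> trivIset setT F ->
  mixture_mu (\bigcup_n F n) = \sum_(n <oo) mixture_mu (F n).
Proof.
have [fs_lip c_ge0 _] := mixJ; move=> BF tF; rewrite /mixture_mu -esum_nneseries.
  apply: eq_esum => i Ji.
  have BFi n : mm_borel (Xs i) (fs i @^-1` F n).
    exact: lip1_borel_preimage (fs_lip _ Ji) _ (BF n).
  rewrite preimage_bigcup mm_mu_bigcup // => [|m n _ _ [x [Fm Fn]]].
    by rewrite nneseriesZl // => n _; apply: mm_mu_ge0.
  by apply: tF => //; exists (fs i x).
by move=> i n Ji; apply: mixture_term_ge0.
Qed.

Lemma is_prob_mixture_mu : is_prob (mm_borel X) mixture_mu.
Proof.
have [_ _ c_sum1] := mixJ; split.
- apply: esum1 => i _; rewrite preimage_set0.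
  by case: (mm_prob (Xs i)) => -> _ _ _; rewrite mule0.
- by move=> A BA; apply: esum_ge0 => i; apply: mixture_term_ge0.
- rewrite -c_sum1; apply: eq_esum => i _; rewrite preimage_setT.
  by case: (mm_prob (Xs i)) => _ _ -> _; rewrite mule1.
move=> F BF tF; rewrite mixture_mu_bigcup //.
apply: is_cvg_ereal_nneg_natsum => n _.
by apply: esum_ge0 => i; apply: mixture_term_ge0.
Qed.

End mixture.

Arguments mixture_mu {X} J c {Xs} fs A.
Arguments mixture_admissible {X} J c {Xs} fs.

Section mixture_mmspace.
Variables (X : mmspace) (J : set nat) (c : nat -> RR) (Xs : nat -> mmspace).
Variable fs : forall i, mm_car (Xs i) -> mm_car X.

(* Off admissible data the measure falls back to [mm_mu X], so that the
   mm-space below is always defined. *)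
Definition mixture_measure : set (mm_car X) -> \bar RR :=
  if `[< mixture_admissible J c fs >] then mixture_mu J c fs else mm_mu X.

Lemma is_prob_mixture_measure : is_prob (mm_borel X) mixture_measure.
Proof.
rewrite /mixture_measure; case: asboolP => [|_]; last exact: mm_prob.
exact: is_prob_mixture_mu.
Qed.

Definition mixture_mmspace : mmspace :=
  @MMSpace (mm_car X) (@mm_d X) (@mm_metric X) (@mm_complete X) (@mm_separable X)
    mixture_measure is_prob_mixture_measure.

Lemma mixture_mmspaceE : mixture_admissible J c fs ->
  mm_mu mixture_mmspace = mixture_mu J c fs.
Proof. by move=> mixJ; rewrite /= /mixture_measure asboolT. Qed.

End mixture_mmspace.

Arguments mixture_mmspace {X} J c {Xs} fs.

Lemma dsum_choice [K : set nat] [J : nat -> set nat] [c : nat -> nat -> RR]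
    [P : nat -> set mmspace] [Y : nat -> mmspace] :
  (forall k, K k -> dsum (J k) (c k) P (Y k)) ->
  exists (Xs : nat -> nat -> mmspace) (fs : forall k n, mm_car (Xs k n) -> mm_car (Y k)),
    forall k, K k -> [/\ forall n, J k n -> P n (Xs k n),
      forall n, J k n -> lip1 (fs k n) &
      forall A, mm_borel (Y k) A -> mm_mu (Y k) A = mixture_mu (J k) (c k) (fs k) A].
Proof.
move=> dsumY.
have reps k : exists r : {Xs : nat -> mmspace & forall n, mm_car (Xs n) -> mm_car (Y k)},
    K k -> [/\ forall n, J k n -> P n (projT1 r n),
      forall n, J k n -> lip1 (projT2 r n) &
      forall A, mm_borel (Y k) A -> mm_mu (Y k) A = mixture_mu (J k) (c k) (projT2 r) A].
  have [Kk|nKk] := pselect (K k).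
    by have [Xs [PXs [fs [fs_lip muY]]]] := dsumY k Kk; exists (existT _ Xs fs).
  by exists (existT _ (fun=> Y k) (fun _ x => x)) => /nKk.
pose r k := proj1_sig (cid (reps k)).
exists (fun k => projT1 (r k)), (fun k => projT2 (r k)) => k.
exact: proj2_sig (cid (reps k)).
Qed.

Definition block_weight (a : nat -> RR) (B : set nat) : RR :=
  fine (\esum_(n in B) (a n)%:E).

Section blocks.
Variables (N M : option nat) (Nk : nat -> set nat) (a : nat -> RR).
Hypotheses (aA1 : in_A1 N a) (NkP : is_partition N M Nk).

Local Notation alpha k := (block_weight a (Nk k)).

Lemma weight_gt0 {n} : idx N n -> (0 < a n)%R.
Proof. by case: aA1 => a01 _ /a01 /andP[]. Qed.

Lemma block_sub {k} : idx M k -> Nk k `<=` idx N.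
Proof. by case: NkP => _ + _ _; apply. Qed.

Lemma block_unique {k l n} : idx M k -> idx M l -> Nk k n -> Nk l n -> k = l.
Proof.
case: NkP => _ _ disj _ Mk Ml Nkn Nln; apply: contrapT => kl.
by have /seteqP[/(_ n (conj Nkn Nln))] := disj k l Mk Ml kl.
Qed.

Lemma block_exists {n} : idx N n -> exists2 k, idx M k & Nk k n.
Proof. by case: NkP => _ _ _ <- [k Mk Nkn]; exists k. Qed.

Lemma block_weightE {k} : idx M k -> \esum_(n in Nk k) (a n)%:E = (alpha k)%:E.
Proof.
move=> Mk; rewrite /block_weight fineK // ge0_fin_numE; last first.
  by apply: esum_ge0 => n /(block_sub Mk) /weight_gt0 /ltW.
apply: le_lt_trans (esum_subset _ (block_sub Mk)) _.
by case: aA1 => _ ->; rewrite ltey.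
Qed.

Lemma block_weight_gt0 {k} : idx M k -> (0 < alpha k)%R.
Proof.
move=> Mk; have [n Nkn] : Nk k !=set0 by case: NkP => + _ _ _; apply.
have an_gt0 := weight_gt0 (block_sub Mk _ Nkn).
rewrite -lte_fin -block_weightE //.
apply: lt_le_trans (esum_subset _ (_ : [set n] `<=` Nk k)); last by move=> _ ->.
by rewrite esum_set1 ?lte_fin // lee_fin ltW.
Qed.

Lemma esum_blocks (h : nat -> \bar RR) : (forall n, idx N n -> 0 <= h n) ->
  \esum_(k in idx M) \esum_(n in Nk k) h n = \esum_(n in idx N) h n.
Proof.
move=> h_ge0; pose Nk' k := if `[< idx M k >] then Nk k else set0.
have Nk'E k : idx M k -> Nk' k = Nk k by move=> Mk; rewrite /Nk' asboolT.
have Nk'_sub k : Nk' k `<=` Nk k by move=> n; rewrite /Nk'; case: asboolP => // _ [].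
have Nk'_triv : trivIset setT Nk'.
  move=> k l _ _ [n [Nk'kn Nk'ln]]; move: Nk'kn Nk'ln; rewrite /Nk'.
  by case: asboolP => // Mk; case: asboolP => // Ml; apply: block_unique.
transitivity (\esum_(k in idx M) \esum_(n in Nk' k) h n).
  by apply: eq_esum => k /Nk'E ->.
rewrite -esum_bigcup; first by case: NkP => _ _ _ <-; rewrite (eq_bigcupr Nk'E).
- exact: sub_trivIset Nk'_triv.
- by move=> n [k Mk /Nk'_sub /(block_sub Mk)]; apply: h_ge0.
Qed.

Lemma esum_blocks_weighted (h : nat -> \bar RR) : (forall n, idx N n -> 0 <= h n) ->
  \esum_(k in idx M) ((alpha k)%:E * \esum_(n in Nk k) ((a n / alpha k)%:E * h n)) =
  \esum_(n in idx N) ((a n)%:E * h n).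
Proof.
move=> h_ge0; rewrite -esum_blocks => [|n Nn]; last first.
  by rewrite mule_ge0 ?h_ge0 // lee_fin ltW ?weight_gt0.
apply: eq_esum => k Mk; have alpha_gt0 := block_weight_gt0 Mk.
rewrite -esumZl ?lee_fin ?ltW // => [|n /(block_sub Mk) Nn]; last first.
  by rewrite mule_ge0 ?h_ge0 // lee_fin divr_ge0 ?ltW ?weight_gt0.
by apply: eq_esum => n _; rewrite muleA -EFinM mulrCA divff ?mulr1 ?gt_eqF.
Qed.

Lemma block_weights_sum1 {k} : idx M k ->
  \esum_(n in Nk k) (a n / alpha k)%:E = 1.
Proof.
move=> Mk; have alpha_gt0 := block_weight_gt0 Mk.
under eq_esum do rewrite mulrC EFinM.
rewrite esumZl ?block_weightE -?EFinM ?mulVf ?gt_eqF ?invr_ge0 ?ltW //.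
by move=> n /(block_sub Mk) Nn; rewrite lee_fin ltW ?weight_gt0.
Qed.

Variable P : nat -> set mmspace.

Lemma dsum_sub_blocks : dsum (idx N) a P `<=`
  dsum (idx M) (fun k => alpha k) (fun k => dsum (Nk k) (fun n => (a n / alpha k)%R) P).
Proof.
move=> X [Xs [PXs [fs [fs_lip muX]]]].
have mixk k : idx M k -> mixture_admissible (Nk k) (fun n => (a n / alpha k)%R) fs.
  move=> Mk; split.
  - by move=> n /(block_sub Mk); apply: fs_lip.
  - by move=> n /(block_sub Mk) Nn; rewrite divr_ge0 ?ltW ?weight_gt0 ?block_weight_gt0.
  - exact: block_weights_sum1.
pose Y k := mixture_mmspace (Nk k) (fun n => (a n / alpha k)%R) fs.
exists Y; split.
  move=> k Mk; exists Xs; split; first by move=> n /(block_sub Mk); apply: PXs.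
  exists fs; split => [|A _]; first by case: (mixk k Mk).
  by rewrite /Y mixture_mmspaceE //; apply: mixk.
exists (fun k x => x); split => [k _ x y //|A BA].
rewrite muX // -esum_blocks_weighted => [|n Nn]; last first.
  by apply: mm_mu_ge0; apply: lip1_borel_preimage (fs_lip n Nn) _ BA.
by apply: eq_esum => k Mk; rewrite /Y mixture_mmspaceE //; apply: mixk.
Qed.

Lemma blocks_sub_dsum :
  dsum (idx M) (fun k => alpha k) (fun k => dsum (Nk k) (fun n => (a n / alpha k)%R) P)
  `<=` dsum (idx N) a P.
Proof.
move=> X [Y [dsumY [gs [gs_lip muX]]]].
have [Xs [fs repY]] := dsum_choice dsumY.
have blk_ex n : exists k, idx N n -> idx M k /\ Nk k n.
  have [/block_exists [k Mk Nkn]|nNn] := pselect (idx N n); first by exists k.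
  by exists 0%N => /nNn.
have [blk blkP] := choice blk_ex.
have blkE k n : idx M k -> Nk k n -> blk n = k.
  move=> Mk Nkn; have [Mb Nbn] := blkP n (block_sub Mk _ Nkn).
  exact: block_unique Mb Mk Nbn Nkn.
pose fs' n (x : mm_car (Xs (blk n) n)) := gs (blk n) (fs (blk n) n x).
have fs'_lip n : idx N n -> lip1 (fs' n).
  move=> Nn x y; have [Mb Nbn] := blkP n Nn; have [_ fs_lip _] := repY _ Mb.
  exact: le_trans (gs_lip _ Mb _ _) (fs_lip _ Nbn x y).
exists (fun n => Xs (blk n) n); split.
  by move=> n Nn; have [Mb Nbn] := blkP n Nn; have [PXs _ _] := repY _ Mb; apply: PXs.
exists fs'; split => // A BA.
rewrite muX // -esum_blocks_weighted => [|n Nn]; last first.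
  by apply: mm_mu_ge0; apply: lip1_borel_preimage (fs'_lip n Nn) _ BA.
apply: eq_esum => k Mk; have [_ _ muY] := repY _ Mk.
rewrite muY /mixture_mu; last exact: lip1_borel_preimage (gs_lip _ Mk) _ BA.
congr (_ * _); apply: eq_esum => n Nkn.
by rewrite /fs' (blkE k n Mk Nkn).
Qed.

End blocks.

Local Close Scope ereal_scope.

Theorem proposition3p22 (N : option nat) (a : nat -> RR) (P : nat -> set mmspace)
    (M : option nat) (Nk : nat -> set nat) :
  in_A1 N a ->
  (forall n, idx N n -> pyramid (P n)) ->
  is_partition N M Nk ->
  let alpha := fun k => fine (\esum_(n in Nk k) (a n)%:E) in
  dsum (idx N) a P =
  dsum (idx M) alpha (fun k => dsum (Nk k) (fun n => a n / alpha k) P).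
Proof.
move=> aA1 _ NkP alpha; apply/seteqP; split.
- exact: dsum_sub_blocks.
- exact: blocks_sub_dsum.
Qed.
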